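(* There exists a language which is accepted by a GLLOWJFA but not by any LOWJFA, and hence LOWJ ⊂ GLLOWJ (proper inclusion).
   Context: A left one-way jumping finite automaton (LOWJFA) is a tuple A = (Σ, Q, q_0, F, R) with alphabet Σ, finite state set Q, start state q_0, final states F ⊆ Q, and rules R ⊆ Q × Σ × Q; a rule (q,a,p) means the automaton goes from state p to state q deleting a, and for each p and a there is at most one such q. For p ∈ Q let Σ_p = {b ∈ Σ : (q,b,p) ∈ R for some q}. Configurations are strings in Σ^* Q; for (q,a,p) ∈ R, x ∈ (Σ \ Σ_p)^* and y ∈ Σ^*, the automaton moves from yaxp to xyq. The accepted language is the set of words w such that w q_0 leads in zero or more moves to q_f for some q_f ∈ F. A generalized left linear one-way jumping finite automaton (GLLOWJFA) is a tuple A = (Σ, Q, q_0, F, R) where R ⊂ Q × Σ^+ × Q is finite; a rule (q,w,p) means from p, delete w, go to q, and for each p ∈ Q and w ∈ Σ^+ there is at most one such q. For p ∈ Q let Σ_p = {w ∈ Σ^+ : (q,w,p) ∈ R for some q}. Configurations are strings in Σ^* Q Σ^*, and the moves are: (1) for t,u,v ∈ Σ^* and (q,x,p) ∈ R, the configuration vxupt moves to vqut, provided u contains no word of Σ_p as a subword and there is no nonempty prefix u_1 of u and nonempty suffix x_2 of x with x_2u_1 = x; (2) for x ∈ Σ^+ and y ∈ Σ^* such that y contains no word of Σ_p as a subword, ypx moves to yxp. The accepted language is {w ∈ Σ^* : w q_0 leads in zero or more moves to q_f for some q_f ∈ F}. LOWJ and GLLOWJ denote the classes of languages accepted by LOWJFA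 and GLLOWJFA respectively. A LOWJFA is exactly a GLLOWJFA all of whose rules delete words of length 1, so LOWJ ⊆ GLLOWJ. *)

From mathcomp Require Import all_boot.
Set Implicit Arguments. Unset Strict Implicit. Unset Printing Implicit Defensive.

Inductive star (C : Type) (step : C -> C -> Prop) : C -> C -> Prop :=
| star_refl c : star step c c
| star_step c1 c2 c3 : step c1 c2 -> star step c2 c3 -> star step c1 c3.

(* A rule (q, a, p) : from p, delete a, go to q. *)
Record lowjfa (Sigma : finType) := LOWJFA {
  lQ : finType;
  lq0 : lQ;
  lF : {set lQ};
  lR : {set lQ * Sigma * lQ};
  lR_det : forall (p : lQ) (a : Sigma) (q q' : lQ),
      (q, a, p) \in lR -> (q', a, p) \in lR -> q = q' }.

Definition lSigma_p (Sigma : finType) (A : lowjfa Sigma) (p : lQ A) (b : Sigma) : bool :=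
  [exists q : lQ A, (q, b, p) \in lR A].

Definition lstep (Sigma : finType) (A : lowjfa Sigma)
    (c c' : seq Sigma * lQ A) : Prop :=
  exists (q p : lQ A) (a : Sigma) (x y : seq Sigma),
    [/\ (q, a, p) \in lR A,
        all (fun b => ~~ @lSigma_p Sigma A p b) x,
        c = (y ++ a :: x, p) & c' = (x ++ y, q)].

Definition lowjfa_accepts (Sigma : finType) (A : lowjfa Sigma) (w : seq Sigma) : Prop :=
  exists qf, qf \in lF A /\ star (@lstep Sigma A) (w, lq0 A) ([::], qf).

Definition LOWJ (Sigma : finType) (L : seq Sigma -> Prop) : Prop :=
  exists A : lowjfa Sigma, forall w, L w <-> lowjfa_accepts A w.

(* Finite rule set R ⊂ Q × Σ^+ × Q given as a list; rule (q, w, p):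
   from p, delete w, go to q. *)
Record gllowjfa (Sigma : finType) := GLLOWJFA {
  gQ : finType;
  gq0 : gQ;
  gF : {set gQ};
  gR : seq (gQ * seq Sigma * gQ);
  gR_nonempty : forall q w p, (q, w, p) \in gR -> w != [::];
  gR_det : forall (p : gQ) (w : seq Sigma) (q q' : gQ),
      (q, w, p) \in gR -> (q', w, p) \in gR -> q = q' }.

Definition gSigma_p (Sigma : finType) (A : gllowjfa Sigma) (p : gQ A) (w : seq Sigma) : Prop :=
  exists q, (q, w, p) \in gR A.

Definition no_subword_of (Sigma : finType) (A : gllowjfa Sigma) (p : gQ A) (u : seq Sigma) : Prop :=
  forall w, @gSigma_p Sigma A p w -> ~~ infix w u.

(* configurations (l, p, r) represent l p r in Sigma^* Q Sigma^* *)
Definition gstep (Sigma : finType) (A : gllowjfa Sigma)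
    (c c' : seq Sigma * gQ A * seq Sigma) : Prop :=
  (exists (q p : gQ A) (x v u t : seq Sigma),
     [/\ (q, x, p) \in gR A,
         @no_subword_of Sigma A p u,
         ~ (exists u1 x2, prefix u1 u /\ u1 != [::] /\ suffix x2 x /\ x2 != [::]
                          /\ x2 ++ u1 = x),
         c = (v ++ x ++ u, p, t) & c' = (v, q, u ++ t)])
  \/
  (exists (p : gQ A) (x y : seq Sigma),
     [/\ x != [::], @no_subword_of Sigma A p y, c = (y, p, x) & c' = (y ++ x, p, [::])]).

Definition gllowjfa_accepts (Sigma : finType) (A : gllowjfa Sigma) (w : seq Sigma) : Prop :=
  exists qf, qf \in gF A /\ star (@gstep Sigma A) (w, gq0 A, [::]) ([::], qf, [::]).

Definition GLLOWJ (Sigma : finType) (L : seq Sigma -> Prop) : Prop :=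
  exists A : gllowjfa Sigma, forall w, L w <-> gllowjfa_accepts A w.

From mathcomp Require Import all_boot zify.
Set Implicit Arguments. Unset Strict Implicit. Unset Printing Implicit Defensive.

(* A LOWJFA is simulated by the GLLOWJFA with the same states whose rules delete
   one-letter words, reading a GLLOWJFA configuration l p r as the LOWJFA
   configuration (r ++ l) p. A GLLOWJFA jump y p x |- y x p rotates a prefix y
   free of the letters of Sigma_p, which does not change the next LOWJFA move.

   Write a = true and b = false. The one-state GLLOWJFA with the single rule
   deleting ab accepts every a^n b^n, and only balanced words not starting
   with b. A LOWJFA is deterministic, and on a^n b^n it first consumes the
   final b's one by one along a fixed path of states. By finiteness this path
   either revisits a state, and then some unbalanced a^i b^j is accepted, or it
   reaches a state r with no b-rule after s steps; then both a^(s+2) b^(s+2)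
   and b a^(s+2) b^(s+1) move from r to b b a^(s+1), so the second word would
   be accepted too. *)

Lemma star1 C (R : C -> C -> Prop) c c' : R c c' -> star R c c'.
Proof. by move=> H; apply: star_step H (star_refl _ _). Qed.

Lemma star_trans C (R : C -> C -> Prop) c1 c2 c3 :
  star R c1 c2 -> star R c2 c3 -> star R c1 c3.
Proof. by elim=> // x y z Hxy _ IH /IH; apply: star_step. Qed.

Lemma star_cases C (R : C -> C -> Prop) c c' :
  star R c c' -> c = c' \/ exists2 d, R c d & star R d c'.
Proof. by case=> [|x y z Hxy Hyz]; [left | right; exists y]. Qed.

Lemma star_backward C (R : C -> C -> Prop) (P : C -> Prop) :
  (forall c c', R c c' -> P c' -> P c) ->
  forall c c', star R c c' -> P c' -> P c.
Proof. by move=> HP c c'; elim=> // x y z /HP Hxy _ IH /IH. Qed.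

Lemma star_simulation C D (R : C -> C -> Prop) (S : D -> D -> Prop)
    (sim : C -> D -> Prop) :
  (forall c1 c2 d1, R c1 c2 -> sim c1 d1 -> exists2 d2, sim c2 d2 & star S d1 d2) ->
  forall c1 c2 d1, star R c1 c2 -> sim c1 d1 -> exists2 d2, sim c2 d2 & star S d1 d2.
Proof.
move=> Hsim c1 c2 d1 H; elim: H d1 => [c d1 Hc | x y z Hxy _ IH d1 Hx].
  by exists d1 => //; apply: star_refl.
have [d2 Hy Hd12] := Hsim _ _ _ Hxy Hx.
have [d3 Hz Hd23] := IH _ Hy.
by exists d3 => //; apply: star_trans Hd12 Hd23.
Qed.

Lemma star_terminal_det C (R : C -> C -> Prop) :
  (forall c c1 c2, R c c1 -> R c c2 -> c1 = c2) ->
  forall t, (forall c, ~ R t c) ->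
  forall c c', star R c t -> star R c c' -> star R c' t.
Proof.
move=> Rdet t t_end c c' Ht Hc; elim: Hc Ht => // x y z Hxy _ IH Ht; apply: IH.
case: (star_cases Ht) => [Ext | [d Hxd Hdt]]; first by case: (t_end y); rewrite -Ext.
by rewrite (Rdet _ _ _ Hxy Hxd).
Qed.

Lemma iter_obind_stuck_or_cycle (T : finType) (f : T -> option T) (x : T) :
  (exists k r, iter k (obind f) (Some x) = Some r /\ f r = None) \/
  (exists i j r, [/\ i < j, iter i (obind f) (Some x) = Some r
                          & iter j (obind f) (Some x) = Some r]).
Proof.
set s := fun k => iter k (obind f) (Some x).
have stuck k : s k = None -> exists k' r, s k' = Some r /\ f r = None.
  elim: k => [//|k IH]; rewrite /s iterS -/(s k).
  by case Ek: (s k) => [r|] //= Hr; [exists k, r | apply: IH].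
case: (boolP [forall k : 'I_#|T|.+1, s k != None]) => [/forallP all_some | ].
  right; pose g (k : 'I_#|T|.+1) := odflt x (s k).
  have /injectivePn [i [j neq_ij Eij]] : ~~ injectiveb g.
    by apply/injectiveP => /leq_card; rewrite card_ord ltnn.
  have sE (k : 'I_#|T|.+1) : s k = Some (g k).
    by move: (all_some k); rewrite /g; case: (s k).
  case: (ltngtP i j) => [lt_ij | lt_ji | /val_inj Eq_ij].
  - by exists i, j, (g i); split=> //; [apply: sE | rewrite Eij; apply: sE].
  - by exists j, i, (g i); split=> //; [rewrite Eij; apply: sE | apply: sE].
  - by rewrite Eq_ij eqxx in neq_ij.
by rewrite negb_forall => /existsP [k /negPn /eqP /stuck]; left.
Qed.

Lemma cat_eq_cat_cons (T : Type) (r l y x : seq T) (a : T) :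
  r ++ l = y ++ a :: x ->
  (exists l1, l = l1 ++ a :: x /\ y = r ++ l1) \/
  (exists x1, r = y ++ a :: x1 /\ x = x1 ++ l).
Proof.
elim: r y => [|c r IH] y /=; first by move=> ->; left; exists y.
case: y => [|c' y] /=; first by move=> [<- <-]; right; exists r.
move=> [<- /IH [[l1 [-> ->]] | [x1 [-> ->]]]]; first by left; exists l1.
by right; exists x1.
Qed.

Lemma split_last_uniq (T : eqType) (P : pred T) y a x y' a' x' :
  P a -> P a' -> all (predC P) x -> all (predC P) x' ->
  y ++ a :: x = y' ++ a' :: x' -> [/\ y = y', a = a' & x = x'].
Proof.
move=> Pa Pa' Hx Hx'.
elim: y y' => [|c y IH] [|c' y'] /=.
- by move=> [-> ->].
- by move=> [_ Ex]; move: Hx; rewrite Ex all_cat /= Pa' andbF.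
- by move=> [_ Ex]; move: Hx'; rewrite -Ex all_cat /= Pa andbF.
- by move=> [-> /IH [-> -> ->]].
Qed.

Lemma nseqS_cat T n (x : T) s : nseq n.+1 x ++ s = nseq n x ++ x :: s.
Proof. by rewrite -addn1 nseqD -catA. Qed.

(* The side condition of move (1) of a GLLOWJFA deleting x before u is ~ overlap x u. *)
Definition overlap (T : eqType) (x u : seq T) : Prop :=
  exists u1 x2, prefix u1 u /\ u1 != [::] /\ suffix x2 x /\ x2 != [::] /\ x2 ++ u1 = x.

Lemma overlap1 (T : eqType) (a : T) u : ~ overlap [:: a] u.
Proof.
by case=> [[|? ?] [[|? ?] [_ [_ [_ [_ /(congr1 size)]]]]]] //=; rewrite size_cat addnS.
Qed.

Lemma overlap_true_false u : ~ overlap [:: true; false] u.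
Proof.
case=> u1 [[|c [|c' x2]] [_ [u1n [sx [_ E]]]]] //; first by case: E sx => -> _.
by move/(congr1 size): E u1n => /=; case: u1 => // ? ?; rewrite size_cat addnS.
Qed.

Section Lowjfa.
Variables (Sigma : finType) (A : lowjfa Sigma).
Local Notation lstep := (@lstep Sigma A).

Lemma lSigma_p_rule p q a : (q, a, p) \in lR A -> lSigma_p p a.
Proof. by move=> H; apply/existsP; exists q. Qed.

Lemma lstep_rotate p x y c :
  all (fun b => ~~ lSigma_p p b) y -> lstep (y ++ x, p) c -> lstep (x ++ y, p) c.
Proof.
move=> Hy [q [p' [a [x' [y' [Hr Hx' [E Ep] ->]]]]]]; subst p'.
case: (cat_eq_cat_cons E) => [[l1 [Ex ->]] | [x1 [Ey _]]].
  exists q, p, a, (x' ++ y), l1; split=> //.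
  - by rewrite all_cat Hx' Hy.
  - by rewrite Ex -catA.
  - by rewrite catA.
by move: Hy; rewrite Ey all_cat /= (lSigma_p_rule Hr) andbF.
Qed.

Lemma lstep_det c c1 c2 : lstep c c1 -> lstep c c2 -> c1 = c2.
Proof.
move=> [q [p [a [x [y [Hr Hx -> ->]]]]]].
move=> [q' [p' [a' [x' [y' [Hr' Hx' [E Ep] ->]]]]]]; subst p'.
have [-> Ea ->] := split_last_uniq (lSigma_p_rule Hr) (lSigma_p_rule Hr') Hx Hx' E.
by rewrite (lR_det Hr (_ : (q', a, p) \in lR A)) // Ea.
Qed.

Lemma lstep_nil q c : ~ lstep ([::], q) c.
Proof. by move=> [q' [p [a [x [y [_ _ E _]]]]]]; case: y E. Qed.

Lemma lstar_det qf c c' :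
  star lstep c ([::], qf) -> star lstep c c' -> star lstep c' ([::], qf).
Proof. exact/star_terminal_det/lstep_nil/lstep_det. Qed.

Definition lnext (a : Sigma) (p : lQ A) : option (lQ A) := [pick q | (q, a, p) \in lR A].

Definition lpath (a : Sigma) (k : nat) : option (lQ A) :=
  iter k (obind (lnext a)) (Some (lq0 A)).

Lemma lnext_rule a p q : lnext a p = Some q -> (q, a, p) \in lR A.
Proof. by rewrite /lnext; case: pickP => // q' Hq' [<-]. Qed.

Lemma lnext_None a p : lnext a p = None -> ~~ lSigma_p p a.
Proof.
by rewrite /lnext; case: pickP => // no_rule _; apply/existsP => [[q]]; rewrite no_rule.
Qed.

Lemma lstar_lpath a k r y m : lpath a k = Some r ->
  star lstep (y ++ nseq (k + m) a, lq0 A) (y ++ nseq m a, r).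
Proof.
elim: k r m => [r m [<-] | k IH r m]; first exact: star_refl.
rewrite /lpath iterS -/(lpath a k) addSnnS; case Ek: (lpath a k) => [p|] // Hp.
apply: star_trans (IH _ m.+1 Ek) (star1 _).
exists r, p, a, [::], (y ++ nseq m a); split => //.
- exact: lnext_rule Hp.
- by rewrite -addn1 nseqD catA.
Qed.

End Lowjfa.

Section Embedding.
Variables (Sigma : finType) (A : lowjfa Sigma).

Definition embed_rules : seq (lQ A * seq Sigma * lQ A) :=
  [seq (t.1.1, [:: t.1.2], t.2) | t <- enum (lR A)].

Lemma embed_rulesP q w p :
  (q, w, p) \in embed_rules -> exists2 a, w = [:: a] & (q, a, p) \in lR A.
Proof. by case/mapP=> [[[q1 a] p1]] /=; rewrite mem_enum => H [-> -> ->]; exists a. Qed.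

Lemma mem_embed_rules q a p : (q, a, p) \in lR A -> (q, [:: a], p) \in embed_rules.
Proof. by move=> H; apply/mapP; exists (q, a, p); rewrite ?mem_enum. Qed.

Lemma embed_rules_nonempty q w p : (q, w, p) \in embed_rules -> w != [::].
Proof. by case/embed_rulesP=> a ->. Qed.

Lemma embed_rules_det p w q q' :
  (q, w, p) \in embed_rules -> (q', w, p) \in embed_rules -> q = q'.
Proof. by case/embed_rulesP=> a -> H1 /embed_rulesP [_ [<-] H2]; apply: lR_det H1 H2. Qed.

Definition gllowjfa_of_lowjfa : gllowjfa Sigma :=
  GLLOWJFA (lq0 A) (lF A) embed_rules_nonempty embed_rules_det.

Local Notation G := gllowjfa_of_lowjfa.
Local Notation lstep := (@lstep Sigma A).
Local Notation gstep := (@gstep Sigma G).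

Definition lconf (d : seq Sigma * gQ G * seq Sigma) : seq Sigma * lQ A :=
  (d.2 ++ d.1.1, d.1.2).

Lemma embed_no_subword p u :
  no_subword_of (A := G) p u <-> all (fun b => ~~ lSigma_p p b) u.
Proof.
split=> [Hu | /allP Hu w [q /embed_rulesP [a -> Hq]]].
  apply/allP=> b Hb; apply/existsP=> [[q Hq]].
  by move: (Hu _ (ex_intro _ q (mem_embed_rules Hq))); rewrite infix1s Hb.
by rewrite infix1s; apply/negP => /Hu; rewrite (lSigma_p_rule Hq).
Qed.

Lemma lstep_gstar c c' d : lstep c c' -> c = lconf d ->
  exists2 d', c' = lconf d' & star gstep d d'.
Proof.
case: d => [[l p'] r] [q [p [a [x [y [Hr Hx -> ->]]]]]] [/esym Ew <-].
case: (cat_eq_cat_cons Ew) => [[l1 [-> ->]] | [x1 [-> Ex]]].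
  exists (l1, q, x ++ r); first by rewrite /lconf /= catA.
  apply: star1; left; exists q, p, [:: a], l1, x, r.
  by split=> //; [apply: mem_embed_rules | apply/embed_no_subword | apply: overlap1].
move: Hx; rewrite Ex all_cat => /andP [Hx1 Hl].
exists (l ++ y, q, x1); first by rewrite /lconf /= catA.
apply: star_step (star1 _).
  by right; exists p, (y ++ a :: x1), l; split=> //; [case: (y) | apply/embed_no_subword].
left; exists q, p, [:: a], (l ++ y), x1, [::]; split=> //.
- exact: mem_embed_rules.
- exact/embed_no_subword.
- exact: overlap1.
- by rewrite -catA.
- by rewrite cats0.
Qed.

Lemma gstep_lstar d d' qf : gstep d d' ->
  star lstep (lconf d') ([::], qf) -> star lstep (lconf d) ([::], qf).
Proof.
case=> [[q [p [x [v [u [t [Hr Hu _ -> ->]]]]]]] | [p [x [y [x_ne Hy -> ->]]]]].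
  case/embed_rulesP: Hr => a -> Hr; apply: star_step.
  exists q, p, a, u, (t ++ v); rewrite /lconf /= -!catA.
  by split=> //; apply/embed_no_subword.
rewrite /lconf /= => Hs; case: (star_cases Hs) => [[/eqP] | [c Hc Hcf]].
  by rewrite -size_eq0 size_cat addn_eq0 !size_eq0 (negPf x_ne) andbF.
by apply: star_step Hcf; apply: lstep_rotate Hc; apply/embed_no_subword.
Qed.

Lemma gllowjfa_of_lowjfaP w : lowjfa_accepts A w <-> gllowjfa_accepts G w.
Proof.
split=> [[qf [Hf Hrun]] | [qf [Hf Hrun]]]; exists qf; split=> //.
  have [[[l q] r] [Erl ->] Hd] := star_simulation lstep_gstar Hrun
    (erefl : (w, lq0 A) = lconf (w, lq0 A, [::])).
  by case: r l Erl Hd => [|? ?] [|? ?].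
apply: (star_backward (P := fun d => star lstep (lconf d) ([::], qf)) _ Hrun).
  by move=> d d'; apply: gstep_lstar.
exact: star_refl.
Qed.

End Embedding.

Definition ab_rules : seq (unit * seq bool * unit) := [:: (tt, [:: true; false], tt)].

Lemma ab_rulesP q x p : (q, x, p) \in ab_rules -> x = [:: true; false].
Proof. by rewrite inE => /eqP [_ -> _]. Qed.

Lemma ab_rules_nonempty q x p : (q, x, p) \in ab_rules -> x != [::].
Proof. by move/ab_rulesP ->. Qed.

Lemma ab_rules_det (p : unit) (w : seq bool) (q q' : unit) :
  (q, w, p) \in ab_rules -> (q', w, p) \in ab_rules -> q = q'.
Proof. by case: q; case: q'. Qed.

Definition Gab : gllowjfa bool := GLLOWJFA tt setT ab_rules_nonempty ab_rules_det.

Definition Lab : seq bool -> Prop := gllowjfa_accepts Gab.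

Lemma Gab_no_subword_nseq n c : no_subword_of (A := Gab) tt (nseq n c).
Proof.
move=> w [q /ab_rulesP ->]; apply/negP=> /mem_infix sub.
have /nseqP [Ec _] := sub true (mem_head _ _).
have /sub/nseqP [] : false \in [:: true; false] by rewrite !inE.
by rewrite -Ec.
Qed.

Lemma Gab_run n :
  star (gstep (A := Gab)) (nseq n true, tt, nseq n false) ([::], tt, [::]).
Proof.
elim: n => [|n IH]; first exact: star_refl.
apply: star_step (star_step _ IH).
  right; exists tt, (nseq n.+1 false), (nseq n.+1 true).
  by split=> //; apply: Gab_no_subword_nseq.
left; exists tt, tt, [:: true; false], (nseq n true), (nseq n false), [::].
split=> //; [exact: Gab_no_subword_nseq | exact: overlap_true_false | | by rewrite cats0].
by rewrite nseqS_cat.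
Qed.

Lemma Gab_accepts n : Lab (nseq n true ++ nseq n false).
Proof.
exists tt; split; first exact: in_setT.
case: n => [|n]; first exact: star_refl.
apply: star_step (Gab_run n); left.
exists tt, tt, [:: true; false], (nseq n true), (nseq n false), [::].
split=> //; [exact: Gab_no_subword_nseq | exact: overlap_true_false | | by rewrite cats0].
by rewrite nseqS_cat.
Qed.

Definition Gab_inv (d : seq bool * unit * seq bool) : bool :=
  head true d.1.1 && (count_mem true (d.1.1 ++ d.2) == count_mem false (d.1.1 ++ d.2)).

Lemma gstep_Gab_inv d d' : gstep (A := Gab) d d' -> Gab_inv d' -> Gab_inv d.
Proof.
rewrite /Gab_inv.
case=> [[q [p [x [v [u [t [/ab_rulesP -> _ _ -> ->]]]]]]] | [p [x [y [_ _ -> ->]]]]] /=.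
  case/andP=> Hv /eqP Hc; apply/andP; split; first by case: v Hv {Hc}.
  by move: Hc; rewrite !count_cat /= => Hc; apply/eqP; lia.
by rewrite cats0 => /andP [Hh ->]; rewrite andbT; case: y Hh.
Qed.

Lemma Lab_head_count w : Lab w -> head true w /\ count_mem true w = count_mem false w.
Proof.
case=> qf [_ Hrun].
have /andP [Hh /eqP Hc] := star_backward gstep_Gab_inv Hrun isT.
by move: Hc; rewrite /= cats0.
Qed.

Section NotLOWJ.
Variable B : lowjfa bool.
Local Notation lstep := (@lstep bool B).
Local Notation lpath := (@lpath bool B).
Hypothesis B_Lab : forall w, Lab w <-> lowjfa_accepts B w.

Lemma lpath_no_cycle i j r :
  i < j -> lpath false i = Some r -> lpath false j = Some r -> False.
Proof.
move=> lt_ij Hi Hj.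
have [qf [Hqf Hrun]] := (B_Lab _).1 (Gab_accepts i).
have Hri := lstar_lpath (nseq i true) 0 Hi; rewrite addn0 in Hri.
have Hrj := lstar_lpath (nseq i true) 0 Hj; rewrite addn0 in Hrj.
have Hacc := star_trans Hrj (lstar_det Hrun Hri).
have [_] := Lab_head_count ((B_Lab _).2 (ex_intro _ qf (conj Hqf Hacc))).
by rewrite !count_cat !count_nseq /=; lia.
Qed.

Lemma lpath_no_dead_end s r :
  lpath false s = Some r -> lnext false r = None -> False.
Proof.
move=> Hs /lnext_None no_false.
have [qf [Hqf Hrun]] := (B_Lab _).1 (Gab_accepts s.+2).
have Hr1 := lstar_lpath (nseq s.+2 true) 2 Hs; rewrite addn2 in Hr1.
have Hr := lstar_det Hrun Hr1.
have [q Hq] : exists q, (q, true, r) \in lR B.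
  case: (star_cases Hr) => [[] // | [c [q [p [[] [x [y [Hrule _ [_ Ep] _]]]]]] _]];
    subst p; first by exists q.
  by rewrite (lSigma_p_rule Hrule) in no_false.
have step1 : lstep (nseq s.+2 true ++ nseq 2 false, r)
                   (nseq 2 false ++ nseq s.+1 true, q).
  exists q, r, true, (nseq 2 false), (nseq s.+1 true).
  by split=> //; [rewrite /= no_false | rewrite nseqS_cat].
have step2 : lstep (false :: nseq s.+2 true ++ nseq 1 false, r)
                   (nseq 2 false ++ nseq s.+1 true, q).
  exists q, r, true, (nseq 1 false), (false :: nseq s.+1 true).
  by split=> //; [rewrite /= no_false | rewrite nseqS_cat].
have Hr2 := lstar_lpath (false :: nseq s.+2 true) 1 Hs; rewrite addn1 in Hr2.
have Hacc := star_trans Hr2 (star_step step2 (lstar_det Hr (star1 step1))).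
by have [] := Lab_head_count ((B_Lab _).2 (ex_intro _ qf (conj Hqf Hacc))).
Qed.

End NotLOWJ.

Lemma Lab_not_LOWJ : ~ LOWJ Lab.
Proof.
case=> B B_Lab.
case: (iter_obind_stuck_or_cycle (lnext (A := B) false) (lq0 B)) =>
  [[s [r [Hs Hr]]] | [i [j [r [lt_ij Hi Hj]]]]].
  exact: (lpath_no_dead_end B_Lab Hs Hr).
exact: (lpath_no_cycle B_Lab lt_ij Hi Hj).
Qed.

Theorem lemma3 :
  (forall (Sigma : finType) (L : seq Sigma -> Prop), LOWJ L -> GLLOWJ L) /\
  (exists (Sigma : finType) (L : seq Sigma -> Prop), GLLOWJ L /\ ~ LOWJ L).
Proof.
split; last by exists bool, Lab; split; [exists Gab | exact: Lab_not_LOWJ].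
move=> Sigma L [A A_L]; exists (gllowjfa_of_lowjfa A) => w.
by rewrite A_L gllowjfa_of_lowjfaP.
Qed.
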